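(* Let $l_0\ge1$ be an integer and consider the string $\mathbf s=``G_{\mu\mu}G^{(\mu)}_{\nu\nu}S_{\mu\nu}''$. Let $w=a_1a_2\cdots a_{4l_0}$ be any binary sequence of length $4l_0$ such that $\mathbf s_w\ne\emptyset$. Then either $\mathcal F_{\rm off}(\mathbf s_w)\ge2l_0$, or $\mathbf s_w$ is maximally expanded.
   Context: Fix two distinct symbols (indices) $\mu,\nu$. A string is a finite concatenation of symbols from the alphabet $\mathfrak A=\{G_{\alpha\beta},\,G_{\alpha\alpha}^{-1},\,S_{\alpha\beta}:\alpha,\beta\in\{\mu,\nu\}\}\cup\{G^{(\nu)}_{\mu\mu},G^{(\mu)}_{\nu\nu},(G^{(\nu)}_{\mu\mu})^{-1},(G^{(\mu)}_{\nu\nu})^{-1}\}$; $\emptyset$ denotes the empty string (strings may carry a sign $\pm$, which is irrelevant here). The maximally expanded symbols are $\mathfrak A_{\max}=\{G_{\mu\nu},G_{\nu\mu},G^{(\nu)}_{\mu\mu},G^{(\mu)}_{\nu\nu},(G^{(\nu)}_{\mu\mu})^{-1},(G^{(\mu)}_{\nu\nu})^{-1},S_{\mu\mu},S_{\nu\nu},S_{\mu\nu},S_{\nu\mu}\}$; a string is maximally expanded if all its symbols lie in $\mathfrak A_{\max}$. The off-diagonal symbols are $G_{\mu\nu},G_{\nu\mu},S_{\mu\nu},S_{\nu\mu}$; $\mathcal F_{\rm off}(\mathbf s)$ is the number of off-diagonal symbols in $\mathbf s$ (counted with multiplicity). String operators, with $\alpha\ne\beta\in\{\mu,\nu\}$: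 (i) $\tau_0$: find the first occurrence in $\mathbf s$ of a symbol $G_{\alpha\alpha}$ or $G_{\alpha\alpha}^{-1}$ (for some $\alpha\in\{\mu,\nu\}$; these are the symbols without superscript); replace $G_{\alpha\alpha}$ by $G^{(\beta)}_{\alpha\alpha}$, resp. $G_{\alpha\alpha}^{-1}$ by $(G^{(\beta)}_{\alpha\alpha})^{-1}$; if none is found, $\tau_0(\mathbf s)=\mathbf s$. (ii) $\tau_1$: find the same first occurrence; replace $G_{\alpha\alpha}$ by $G_{\alpha\beta}G_{\beta\alpha}G_{\beta\beta}^{-1}$, resp. $G_{\alpha\alpha}^{-1}$ by $-G_{\alpha\beta}G_{\beta\alpha}G_{\alpha\alpha}^{-1}(G^{(\beta)}_{\alpha\alpha})^{-1}G_{\beta\beta}^{-1}$; if none is found, $\tau_1(\mathbf s)=\emptyset$. (iii) $\rho$ replaces each symbol $G_{\alpha\beta}$ ($\alpha\ne\beta$) in $\mathbf s$ by $G_{\alpha\alpha}G^{(\alpha)}_{\beta\beta}S_{\alpha\beta}$. All operators map $\emptyset$ to $\emptyset$. For a binary sequence $w=a_1\cdots a_m$, $\mathbf s_w:=\rho^{a_m}\tau_{a_m}\cdots\rho^{a_1}\tau_{a_1}(\mathbf s)$, where $\rho^0$ is the identity and $\rho^1=\rho$. *)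

From Stdlib Require Import List Arith.
Import ListNotations.

Inductive idx : Type := mu | nu.

Definition other (a : idx) : idx := match a with mu => nu | nu => mu end.

Definition idx_eqb (a b : idx) : bool :=
  match a, b with mu, mu | nu, nu => true | _, _ => false end.

(* Alphabet:
   G a b      = G_{ab}            (a, b arbitrary)
   Ginv a     = G_{aa}^{-1}
   S a b      = S_{ab}
   Gsup a     = G^{(other a)}_{aa}        (i.e. G^{(nu)}_{mu mu} or G^{(mu)}_{nu nu})
   Gsupinv a  = (G^{(other a)}_{aa})^{-1} *)
Inductive sym : Type :=
| G (a b : idx)
| Ginv (a : idx)
| S (a b : idx)
| Gsup (a : idx)
| Gsupinv (a : idx).

(* A string is a finite list of symbols; the sign is dropped (irrelevant);
   the empty string (emptyset) is the empty list. *)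
Definition str := list sym.
Definition empty_str : str := [].

Fixpoint tau0 (s : str) : str :=
  match s with
  | [] => []
  | x :: t =>
    match x with
    | G a b => if idx_eqb a b then Gsup a :: t else x :: tau0 t
    | Ginv a => Gsupinv a :: t
    | _ => x :: tau0 t
    end
  end.

Fixpoint tau1_aux (s : str) : option str :=
  match s with
  | [] => None
  | x :: t =>
    match x with
    | G a b =>
      if idx_eqb a b
      then Some ([G a (other a); G (other a) a; Ginv (other a)] ++ t)
      else option_map (cons x) (tau1_aux t)
    | Ginv a =>
      (* sign (-) dropped *)
      Some ([G a (other a); G (other a) a; Ginv a; Gsupinv a; Ginv (other a)] ++ t)
    | _ => option_map (cons x) (tau1_aux t)
    end
  end.

Definition tau1 (s : str) : str :=
  match tau1_aux s with Some s' => s' | None => empty_str end.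

(* rho: G_{ab} (a <> b)  |->  G_{aa} G^{(a)}_{bb} S_{ab};  note G^{(a)}_{bb} = Gsup b *)
Fixpoint rho (s : str) : str :=
  match s with
  | [] => []
  | x :: t =>
    match x with
    | G a b => if idx_eqb a b then x :: rho t
               else G a a :: Gsup b :: S a b :: rho t
    | _ => x :: rho t
    end
  end.

Definition step (s : str) (a : bool) : str :=
  if a then rho (tau1 s) else tau0 s.

(* s_w = rho^{a_m} tau_{a_m} ... rho^{a_1} tau_{a_1} (s), w = a_1 ... a_m *)
Definition apply_word (s : str) (w : list bool) : str := fold_left step w s.

Definition max_sym (x : sym) : bool :=
  match x with
  | G a b => negb (idx_eqb a b)
  | Ginv _ => false
  | S _ _ => true
  | Gsup _ => true
  | Gsupinv _ => true
  end.

Definition maximally_expanded (s : str) : Prop := forallb max_sym s = true.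

Definition off_diag (x : sym) : bool :=
  match x with
  | G a b | S a b => negb (idx_eqb a b)
  | _ => false
  end.

Definition F_off (s : str) : nat := length (filter off_diag s).

Definition s0 : str := [G mu mu; Gsup nu; S mu nu].

(* Let U count the unexpanded symbols G_aa and G_aa^{-1}.  As long as U > 0,
   a 0-step lowers U by one, while a 1-step adds two off-diagonal G's and at
   most one unexpanded symbol, after which rho turns each off-diagonal G into
   an unexpanded G_aa and leaves none behind; so a 1-step raises U by at most 3
   and F_off by exactly 2.  Once U = 0 the string is frozen: tau_0 fixes it and
   tau_1 kills it.  Hence if w has fewer than l0 ones, its more than 3 l0 zeros
   cannot all be paid for by U <= 1 + 3 (#ones), so U reaches 0 and the string
   is maximally expanded; otherwise F_off >= 1 + 2 l0. *)
From Stdlib Require Import List Bool Arith Lia.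
Import ListNotations.

Definition unexpanded (x : sym) : bool := negb (max_sym x).

Definition offdiag_G (x : sym) : bool :=
  match x with G a b => negb (idx_eqb a b) | _ => false end.

Definition n_unexpanded (s : str) : nat := length (filter unexpanded s).

Definition n_offdiag_G (s : str) : nat := length (filter offdiag_G s).

Ltac case_sym x := destruct x as [[] []|[]|[] []|[]|[]].

Lemma maximally_expanded_n_unexpanded (s : str) :
  n_unexpanded s = 0 -> maximally_expanded s.
Proof.
  unfold n_unexpanded, maximally_expanded, unexpanded.
  induction s as [|x t IH]; simpl; auto.
  destruct (max_sym x); simpl; [exact IH|discriminate].
Qed.

Lemma count_occ_true_false (w : list bool) :
  count_occ bool_dec w true + count_occ bool_dec w false = length w.
Proof. induction w as [|[] t IH]; simpl; lia. Qed.

Lemma tau0_F_off (s : str) : F_off (tau0 s) = F_off s.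
Proof.
  unfold F_off; induction s as [|x t IH]; simpl; auto.
  case_sym x; simpl; auto.
Qed.

Lemma tau0_n_offdiag_G (s : str) : n_offdiag_G (tau0 s) = n_offdiag_G s.
Proof.
  unfold n_offdiag_G; induction s as [|x t IH]; simpl; auto.
  case_sym x; simpl; auto.
Qed.

Lemma tau0_n_unexpanded (s : str) :
  0 < n_unexpanded s -> n_unexpanded (tau0 s) + 1 = n_unexpanded s.
Proof.
  unfold n_unexpanded; induction s as [|x t IH]; simpl; [lia|].
  case_sym x; simpl; intro H; auto; lia.
Qed.

Lemma tau0_id (s : str) : n_unexpanded s = 0 -> tau0 s = s.
Proof.
  unfold n_unexpanded; induction s as [|x t IH]; simpl; auto.
  case_sym x; simpl; intro H; try discriminate; rewrite IH; auto.
Qed.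

Lemma tau1_aux_None (s : str) : n_unexpanded s = 0 -> tau1_aux s = None.
Proof.
  unfold n_unexpanded; induction s as [|x t IH]; simpl; auto.
  case_sym x; simpl; intro H; try discriminate; rewrite IH; auto.
Qed.

Lemma tau1_aux_counts (s s' : str) : tau1_aux s = Some s' ->
  F_off s' = F_off s + 2 /\ n_offdiag_G s' = n_offdiag_G s + 2 /\
  n_unexpanded s' <= n_unexpanded s + 1.
Proof.
  unfold F_off, n_offdiag_G, n_unexpanded.
  revert s'; induction s as [|x t IH]; simpl; intros s' E; [discriminate|].
  case_sym x; simpl in E;
    try (injection E as <-; simpl; lia);
    destruct (tau1_aux t) as [u|]; simpl in E; try discriminate;
    injection E as <-; simpl; destruct (IH u eq_refl); lia.
Qed.

Lemma rho_F_off (s : str) : F_off (rho s) = F_off s.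
Proof.
  unfold F_off; induction s as [|x t IH]; simpl; auto.
  case_sym x; simpl; auto.
Qed.

Lemma rho_n_offdiag_G (s : str) : n_offdiag_G (rho s) = 0.
Proof.
  unfold n_offdiag_G; induction s as [|x t IH]; simpl; auto.
  case_sym x; simpl; auto.
Qed.

Lemma rho_n_unexpanded (s : str) :
  n_unexpanded (rho s) = n_unexpanded s + n_offdiag_G s.
Proof.
  unfold n_unexpanded, n_offdiag_G; induction s as [|x t IH]; simpl; auto.
  case_sym x; simpl; lia.
Qed.

Lemma step_true_Some (s : str) :
  step s true <> [] -> exists s', tau1_aux s = Some s' /\ step s true = rho s'.
Proof.
  unfold step, tau1; destruct (tau1_aux s) as [s'|]; intro H.
  - exists s'; auto.
  - contradiction.
Qed.

Lemma step_n_offdiag_G (s : str) (a : bool) :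
  n_offdiag_G s = 0 -> n_offdiag_G (step s a) = 0.
Proof.
  destruct a; simpl; intro H; [apply rho_n_offdiag_G|now rewrite tau0_n_offdiag_G].
Qed.

Lemma step_true_F_off (s : str) :
  step s true <> [] -> F_off (step s true) = F_off s + 2.
Proof.
  intro H; destruct (step_true_Some s H) as (s' & E & ->).
  rewrite rho_F_off; apply (tau1_aux_counts s s' E).
Qed.

(* The 3 is rho re-expanding the two off-diagonal G's created by tau_1. *)
Lemma step_true_n_unexpanded (s : str) :
  n_offdiag_G s = 0 -> step s true <> [] ->
  n_unexpanded (step s true) <= n_unexpanded s + 3.
Proof.
  intros H0 H; destruct (step_true_Some s H) as (s' & E & ->).
  rewrite rho_n_unexpanded; destruct (tau1_aux_counts s s' E); lia.
Qed.

Lemma apply_word_nil (w : list bool) : apply_word [] w = [].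
Proof. induction w as [|[] t IH]; simpl; auto. Qed.

Lemma apply_word_step_nonempty (s : str) (a : bool) (w : list bool) :
  apply_word s (a :: w) <> [] -> step s a <> [].
Proof.
  simpl; intros H E; rewrite E, apply_word_nil in H; contradiction.
Qed.

Lemma apply_word_frozen (s : str) (w : list bool) :
  n_unexpanded s = 0 -> apply_word s w <> [] -> apply_word s w = s.
Proof.
  intro H0; induction w as [|[] t IH]; intro H; simpl in *; auto.
  - unfold step, tau1 in H; rewrite tau1_aux_None, apply_word_nil in H by auto.
    contradiction.
  - unfold step in *; rewrite tau0_id in * by auto; auto.
Qed.

Lemma apply_word_F_off (s : str) (w : list bool) : apply_word s w <> [] ->
  F_off (apply_word s w) = F_off s + 2 * count_occ bool_dec w true.
Proof.
  revert s; induction w as [|a t IH]; intros s H; simpl; [lia|].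
  pose proof (apply_word_step_nonempty s a t H) as Hstep.
  rewrite (IH _ H); destruct a.
  - rewrite (step_true_F_off s Hstep); simpl; lia.
  - simpl; rewrite tau0_F_off; lia.
Qed.

Lemma apply_word_n_unexpanded (s : str) (w : list bool) :
  n_offdiag_G s = 0 -> apply_word s w <> [] ->
  n_unexpanded (apply_word s w) = 0 \/
  n_unexpanded (apply_word s w) + count_occ bool_dec w false
    <= n_unexpanded s + 3 * count_occ bool_dec w true.
Proof.
  revert s; induction w as [|a t IH]; intros s H0 H; [simpl; lia|].
  destruct (Nat.eq_dec (n_unexpanded s) 0) as [Hs|Hs].
  { left; rewrite (apply_word_frozen s _ Hs H); exact Hs. }
  pose proof (apply_word_step_nonempty s a t H) as Hstep.
  destruct (IH (step s a) (step_n_offdiag_G s a H0) H) as [IHt|IHt];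
    [left; exact IHt|right].
  change (apply_word s (a :: t)) with (apply_word (step s a) t).
  destruct a; simpl count_occ.
  - pose proof (step_true_n_unexpanded s H0 Hstep); lia.
  - pose proof (tau0_n_unexpanded s ltac:(lia)); simpl step in *; lia.
Qed.

Theorem lemma4p8 (l0 : nat) (w : list bool) :
  1 <= l0 ->
  length w = 4 * l0 ->
  apply_word s0 w <> empty_str ->
  2 * l0 <= F_off (apply_word s0 w) \/ maximally_expanded (apply_word s0 w).
Proof.
  intros Hl0 Hlen Hne.
  pose proof (apply_word_F_off s0 w Hne) as HF.
  pose proof (apply_word_n_unexpanded s0 w eq_refl Hne) as HU.
  pose proof (count_occ_true_false w) as Hcount.
  change (F_off s0) with 1 in HF; change (n_unexpanded s0) with 1 in HU.
  destruct (le_lt_dec l0 (count_occ bool_dec w true)); [left; lia|right].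
  destruct HU as [HU|HU]; [now apply maximally_expanded_n_unexpanded|lia].
Qed.
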